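(* Let $n\ge2$ and $\mathbf{F}\in\mathbb{R}^n$ with $F_k>0$ for all $k$ and $F_k\ge F_{k+1}$ for $3\le k\le n-1$. Let $U_i=\frac{i}{3/F_1+\sum_{k=2}^i1/F_k}$ and $V_i=\frac{i-1}{\sum_{k=1}^i1/F_k}$ for $2\le i\le n$; let $u$ be the least index in $\arg\max_{2\le i\le n}U_i$ and $v$ the least index in $\arg\max_{2\le i\le n}V_i$. Assume $U_u\ge V_v$. Define $\boldsymbol\mu\in\mathbb{R}^n$ by $\mu_1=\frac12-\frac{U_u}{F_1}$, $\mu_k=1-\frac{U_u}{F_k}$ for $3\le k\le u$, and $\mu_k=0$ otherwise. Then: (1) $\mu_k\ge0$ for all $1\le k\le n$; (2) $F_1(\frac12-\mu_1)=F_2\big(\frac12+3\mu_1+\sum_{i=3}^u\mu_i\big)=F_k(1-\mu_k)=U_u$ for all $3\le k\le u$; (3) $F_k\le U_u$ for all $u+1\le k\le n$.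
   Context: Note $U_u=\frac{u}{3/F_1+\sum_{k=2}^u1/F_k}$. *)

(* Vectors F in R^n are represented 1-based as F : nat -> R;
   only the values F 1, ..., F n matter. *)
From mathcomp Require Import all_boot all_order all_algebra.
Set Implicit Arguments. Unset Strict Implicit. Unset Printing Implicit Defensive.
Import Order.TTheory GRing.Theory Num.Theory.
Local Open Scope ring_scope.

Definition Useq (R : realFieldType) (F : nat -> R) (i : nat) : R :=
  i%:R / (3 / F 1%N + \sum_(2 <= k < i.+1) (F k)^-1).

Definition Vseq (R : realFieldType) (F : nat -> R) (i : nat) : R :=
  (i.-1)%:R / (\sum_(1 <= k < i.+1) (F k)^-1).

Definition least_argmax (R : realFieldType) (f : nat -> R) (n u : nat) : Prop :=
  [/\ (2 <= u <= n)%N,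
      (forall i, (2 <= i <= n)%N -> f i <= f u) &
      (forall i, (2 <= i < u)%N -> f i < f u)].

Definition mu (R : realFieldType) (F : nat -> R) (u k : nat) : R :=
  if k == 1%N then 1 / 2 - Useq F u / F 1%N
  else if (3 <= k <= u)%N then 1 - Useq F u / F k
  else 0.

(* U_{i+1} = (i + 1)/(S_i + 1/F_{i+1}) with U_i = i/S_i is a mediant of U_i and
   F_{i+1}, so U increases at step i+1 exactly when F_{i+1} exceeds U_i, and then
   F_{i+1} also exceeds U_{i+1}.  Since u is the least maximiser, U_{u-1} < U_u
   gives U_u < F_u <= F_k for 3 <= k <= u, while U_{u+1} <= U_u gives
   F_k <= F_{u+1} <= U_u for k > u.  Comparing U_u = u/S_u with
   V_u = (u-1)/(S_u - 2/F_1) <= V_v <= U_u yields 2 U_u/F_1 <= 1, i.e. mu_1 >= 0.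
   The balance equalities are then field identities. *)
From mathcomp Require Import all_boot all_order all_algebra.
From mathcomp Require Import zify ring lra.
Import Order.TTheory GRing.Theory Num.Theory.
Set Implicit Arguments. Unset Strict Implicit. Unset Printing Implicit Defensive.
Local Open Scope ring_scope.

Section Mediant.
Variables (R : realFieldType) (a b s t : R).
Hypotheses (s_gt0 : 0 < s) (t_gt0 : 0 < t).

Lemma mediant_ltl : (a / s < (a + b) / (s + t)) = (a * t < b * s).
Proof.
rewrite ltr_pdivrMr // mulrAC ltr_pdivlMr ?addr_gt0 //.
by rewrite mulrDr mulrDl ltrD2l mulrC.
Qed.

Lemma mediant_ltr : ((a + b) / (s + t) < b / t) = (a * t < b * s).
Proof.
rewrite ltr_pdivrMr ?addr_gt0 // mulrAC ltr_pdivlMr //.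
by rewrite mulrDr mulrDl ltrD2r mulrC.
Qed.

Lemma mediant_lt : a / s < (a + b) / (s + t) -> (a + b) / (s + t) < b / t.
Proof. by rewrite mediant_ltl mediant_ltr. Qed.

Lemma mediant_ge : (a + b) / (s + t) <= a / s -> b / t <= a / s.
Proof.
move=> le_ms; have le_bm : b / t <= (a + b) / (s + t).
  by rewrite leNgt mediant_ltr -mediant_ltl -leNgt.
exact: le_trans le_bm le_ms.
Qed.

End Mediant.

Definition Uden {R : realFieldType} (F : nat -> R) (i : nat) : R :=
  3 / F 1%N + \sum_(2 <= k < i.+1) (F k)^-1.

Section Mu.
Variables (R : realFieldType) (F : nat -> R) (u : nat).

Lemma mu1 : mu F u 1 = 1 / 2 - Useq F u / F 1%N.
Proof. by []. Qed.

Lemma mu_mid k : (3 <= k <= u)%N -> mu F u k = 1 - Useq F u / F k.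
Proof.
by move=> k_mid; rewrite /mu k_mid; case: eqP => // k1; rewrite k1 in k_mid.
Qed.

Lemma mu_out k : k != 1%N -> ~~ (3 <= k <= u)%N -> mu F u k = 0.
Proof. by rewrite /mu => /negPf-> /negPf->. Qed.

Lemma sum_mu_mid : (2 <= u)%N ->
  \sum_(3 <= i < u.+1) mu F u i =
    u%:R - 2 - Useq F u * \sum_(3 <= i < u.+1) (F i)^-1.
Proof.
move=> u_ge2; rewrite (eq_big_nat _ _ (F2 := fun i => 1 - Useq F u * (F i)^-1)).
  by rewrite sumrB sumr_const_nat -mulr_sumr subSS natrB.
by move=> i /andP[? ?]; rewrite mu_mid //; apply/andP; lia.
Qed.

End Mu.

Section Useq.
Variables (R : realFieldType) (F : nat -> R) (n : nat).
Hypothesis F_gt0 : forall k, (1 <= k <= n)%N -> 0 < F k.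

Lemma sum_invF_ge0 m i : (1 <= m)%N -> (i <= n)%N ->
  0 <= \sum_(m <= k < i.+1) (F k)^-1.
Proof.
move=> m_ge1 le_in; rewrite big_nat; apply: sumr_ge0 => k /andP[le_mk lt_ki].
by rewrite invr_ge0 ltW // F_gt0 //; lia.
Qed.

Lemma Uden_gt0 i : (1 <= n)%N -> (i <= n)%N -> 0 < Uden F i.
Proof.
move=> n_ge1 le_in; apply: ltr_pwDl; last exact: sum_invF_ge0.
by rewrite divr_gt0 // F_gt0.
Qed.

Lemma UseqE i : Useq F i = i%:R / Uden F i.
Proof. by []. Qed.

Lemma Uden_succ i : (1 <= i)%N -> Uden F i.+1 = Uden F i + (F i.+1)^-1.
Proof. by move=> i_ge1; rewrite /Uden big_nat_recr //= addrA. Qed.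

Lemma Useq_succ i : (1 <= i)%N ->
  Useq F i.+1 = (i%:R + 1) / (Uden F i + (F i.+1)^-1).
Proof. by move=> i_ge1; rewrite UseqE Uden_succ // -natr1. Qed.

Lemma Useq_succ_lt i : (1 <= i)%N -> (i < n)%N ->
  Useq F i < Useq F i.+1 -> Useq F i.+1 < F i.+1.
Proof.
move=> i_ge1 lt_in; rewrite Useq_succ // UseqE.
have Uden_pos : 0 < Uden F i by apply: Uden_gt0; lia.
have Finv_pos : 0 < (F i.+1)^-1 by rewrite invr_gt0 F_gt0 //; lia.
by move=> /(mediant_lt Uden_pos Finv_pos); rewrite div1r invrK.
Qed.

Lemma Useq_succ_ge i : (1 <= i)%N -> (i < n)%N ->
  Useq F i.+1 <= Useq F i -> F i.+1 <= Useq F i.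
Proof.
move=> i_ge1 lt_in; rewrite Useq_succ // UseqE.
have Uden_pos : 0 < Uden F i by apply: Uden_gt0; lia.
have Finv_pos : 0 < (F i.+1)^-1 by rewrite invr_gt0 F_gt0 //; lia.
by move=> /(mediant_ge Uden_pos Finv_pos); rewrite div1r invrK.
Qed.

Lemma Useq_Uden i : (1 <= n)%N -> (i <= n)%N -> Useq F i * Uden F i = i%:R.
Proof. by move=> n_ge1 le_in; rewrite UseqE divfK // gt_eqF // Uden_gt0. Qed.

Lemma Uden_sub2 i : (1 <= i)%N ->
  Uden F i - 2 / F 1%N = \sum_(1 <= k < i.+1) (F k)^-1.
Proof. by move=> i_ge1; rewrite big_ltn // /Uden; ring. Qed.

Lemma Vseq_Uden i : (2 <= i <= n)%N ->
  Vseq F i * (Uden F i - 2 / F 1%N) = i.-1%:R.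
Proof.
move=> /andP[i_ge2 le_in]; rewrite Uden_sub2 1?ltnW // /Vseq divfK // gt_eqF //.
rewrite big_ltn 1?ltnW // ltr_pwDl ?sum_invF_ge0 // invr_gt0 F_gt0 //; lia.
Qed.

Lemma Useq_le_half_F1 i : (2 <= i <= n)%N -> Vseq F i <= Useq F i ->
  Useq F i / F 1%N <= 1 / 2.
Proof.
move=> /andP[i_ge2 le_in] le_VU.
have Uden2_ge0 : 0 <= Uden F i - 2 / F 1%N.
  by rewrite Uden_sub2 ?sum_invF_ge0 //; lia.
have := ler_wpM2r Uden2_ge0 le_VU.
rewrite Vseq_Uden ?i_ge2 // mulrBr Useq_Uden //; last by lia.
have -> : i%:R = i.-1%:R + 1 :> R by rewrite natr1 prednK //; lia.
lra.
Qed.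

Lemma Useq_lt_F_of_least_argmax u : least_argmax (Useq F) n u -> (3 <= u)%N ->
  Useq F u < F u.
Proof.
move=> [/andP[_ le_un] _ U_least] u_ge3.
have u_succ : u = u.-1.+1 by rewrite prednK //; lia.
rewrite u_succ; apply: Useq_succ_lt; rewrite -?u_succ; try lia.
by apply: U_least; lia.
Qed.

Lemma F_succ_le_Useq_of_argmax u : least_argmax (Useq F) n u -> (u < n)%N ->
  F u.+1 <= Useq F u.
Proof.
move=> [/andP[u_ge2 _] U_max _] lt_un.
apply: Useq_succ_ge; rewrite ?U_max //; lia.
Qed.

Lemma F2_balance u : (2 <= u <= n)%N ->
  F 2%N * (1 / 2 + 3 * mu F u 1 + \sum_(3 <= i < u.+1) mu F u i) = Useq F u.
Proof.
move=> /andP[u_ge2 le_un].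
have F12_neq0 : (F 2%N != 0) && (F 1%N != 0).
  by rewrite !gt_eqF ?F_gt0 //; lia.
have n_ge1 : (1 <= n)%N by lia.
rewrite mu1 sum_mu_mid //.
have := Useq_Uden n_ge1 le_un; rewrite /Uden (big_ltn (m := 2)) //.
set U := Useq F u; set A := \sum_(3 <= i < u.+1) (F i)^-1 => U_Uden.
have -> : U * A = u%:R - U * (3 / F 1%N) - U / F 2%N by rewrite -U_Uden; ring.
by field.
Qed.

End Useq.

Lemma noninc_from3 (R : realFieldType) (F : nat -> R) (n : nat) :
  (forall k, (3 <= k <= n.-1)%N -> F k.+1 <= F k) ->
  forall j k, (3 <= j <= k)%N -> (k <= n)%N -> F k <= F j.
Proof.
move=> F_step j k /andP[j_ge3 le_jk] le_kn.
apply: (@Order.NatMonotonyTheory.nonincn_inP _ _ [pred i | 3 <= i <= n]%N) => //.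
- move=> a b; rewrite !inE => /andP[? ?] /andP[? ?] c.
  by rewrite !ltEnat /= => /andP[? ?]; apply/andP; lia.
- by move=> i; rewrite !inE => /andP[? ?] /andP[? ?]; apply: F_step; lia.
- by rewrite inE; apply/andP; lia.
- by rewrite inE; apply/andP; lia.
Qed.

Theorem lemma8 (R : realFieldType) (n : nat) (F : nat -> R) (u v : nat) :
  (2 <= n)%N ->
  (forall k, (1 <= k <= n)%N -> 0 < F k) ->
  (forall k, (3 <= k <= n.-1)%N -> F k.+1 <= F k) ->
  least_argmax (Useq F) n u ->
  least_argmax (Vseq F) n v ->
  Vseq F v <= Useq F u ->
  [/\ (forall k, (1 <= k <= n)%N -> 0 <= mu F u k),
      [/\ F 1%N * (1 / 2 - mu F u 1) = Useq F u,
          F 2%N * (1 / 2 + 3 * mu F u 1 + \sum_(3 <= i < u.+1) mu F u i) = Useq F u &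
          (forall k, (3 <= k <= u)%N -> F k * (1 - mu F u k) = Useq F u)] &
      (forall k, (u.+1 <= k <= n)%N -> F k <= Useq F u)].
Proof.
move=> n_ge2 F_gt0 F_step U_argmax [_ V_max _] le_VU.
have [/andP[u_ge2 le_un] _ _] := U_argmax.
have F_mono := noninc_from3 F_step.
have F_neq0 k : (1 <= k <= n)%N -> F k != 0 by move/F_gt0/lt0r_neq0.
split.
- move=> k /andP[k_ge1 le_kn]; have [-> | k_neq1] := eqVneq k 1%N.
    rewrite mu1 subr_ge0 (Useq_le_half_F1 F_gt0) ?u_ge2 //.
    by apply: le_trans le_VU; apply: V_max; lia.
  have [k_mid | k_out] := boolP (3 <= k <= u)%N; last by rewrite mu_out.
  have Fk_gt0 : 0 < F k by apply: F_gt0; lia.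
  rewrite mu_mid // subr_ge0 ler_pdivrMr // mul1r ltW //.
  apply: lt_le_trans (Useq_lt_F_of_least_argmax F_gt0 U_argmax _) (F_mono k u _ le_un);
    lia.
- split.
  + by rewrite mu1; field; rewrite F_neq0 //; lia.
  + by rewrite (F2_balance F_gt0) ?u_ge2.
  + by move=> k k_mid; rewrite mu_mid //; field; rewrite F_neq0 //; lia.
- move=> k /andP[lt_uk le_kn].
  apply: le_trans (F_mono u.+1 k _ le_kn) (F_succ_le_Useq_of_argmax F_gt0 U_argmax _);
    lia.
Qed.
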